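(* Let $k$ be a field, $U$ a $d$-dimensional $k$-vector space, and $\phi_3$ a nonzero element of $D_3U^*$. Then there exist a unit $\alpha$ of $k$ and a basis $x_1^*,\dots,x_d^*$ of $U^*$ such that (a) $\alpha\phi_3=x_1^{*(3)}+x_1^*\phi_{2,0}+\phi_{3,0}$, or (b) $\alpha\phi_3=x_1^{*(2)}x_2^*+x_1^*\phi_{2,0}+\phi_{3,0}$, or (c) $k$ has characteristic two and $\phi_3=\sum_{1\le i<j<l\le d}\alpha_{i,j,l}\,x_i^*x_j^*x_l^*$ for some $\alpha_{i,j,l}\in k$, where in (a) and (b) $\phi_{i,0}$ is an element of $D_i\big(\bigoplus_{2\le j\le d}k\,x_j^*\big)$ for $i=2,3$.
   Context: $U^*=\operatorname{Hom}_k(U,k)$ and $D_\bullet U^*=\bigoplus_iD_iU^*$, $D_iU^*=\operatorname{Hom}_k(\operatorname{Sym}_iU,k)$, is the divided power algebra of $U^*$. For $v\in U^*$, $v^{(n)}$ denotes the $n$-th divided power (behaving like $v^n/n!$); for a basis $x_1^*,\dots,x_d^*$ of $U^*$ dual to a basis $x_1,\dots,x_d$ of $U$, $x_1^{*(a_1)}\cdots x_d^{*(a_d)}$ is the functional taking value $1$ on the monomial $x_1^{a_1}\cdots x_d^{a_d}$ and $0$ on the other monomials of the same degree; factors written without parenthesized exponent have exponent one. For a subspace $W\subseteq U^*$, $D_iW$ is the subspace of $D_iU^*$ generated by products of $i$ elements of $W$ (in the divided power sense). *)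

From HB Require Import structures.
From mathcomp Require Import all_boot all_order all_fingroup all_algebra.
Set Implicit Arguments. Unset Strict Implicit. Unset Printing Implicit Defensive.
Import GRing.Theory.
Local Open Scope ring_scope.

Section DividedPowers.
Variables (k : fieldType) (U : vectType k).

Definition Udual := 'Hom(U, k^o).

(* Elements of D_n U^* = Hom_k(Sym_n U, k) are identified with symmetric
   n-linear forms on U (the universal property of Sym_n U). *)
Definition dform (n : nat) := {ffun 'I_n -> U} -> k.

Definition multilinear n (f : dform n) : Prop :=
  forall (u : {ffun 'I_n -> U}) (i : 'I_n) (a : k) (v w : U),
    f [ffun j => if j == i then a *: v + w else u j]
    = a * f [ffun j => if j == i then v else u j]
      + f [ffun j => if j == i then w else u j].

Definition symmetric n (f : dform n) : Prop :=
  forall (u : {ffun 'I_n -> U}) (s : 'S_n), f [ffun j => u (s j)] = f u.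

Definition inDU n (f : dform n) : Prop := multilinear f /\ symmetric f.

(* divided power v^(n) : value prod_i v(u_i), i.e. 1 on x^n for v = x^* *)
Definition dpow (v : Udual) (n : nat) : dform n :=
  fun u => \prod_(i < n) (v (u i) : k).

Definition shuffle a b (s : 'S_(a + b)) : bool :=
  [forall i : 'I_a, forall j : 'I_a,
      (i < j)%N ==> (s (lshift b i) < s (lshift b j))%N] &&
  [forall i : 'I_b, forall j : 'I_b,
      (i < j)%N ==> (s (rshift a i) < s (rshift a j))%N].

(* multiplication of the divided power algebra D_. U^* (shuffle product) *)
Definition dmul a b (f : dform a) (g : dform b) : dform (a + b) :=
  fun u => \sum_(s : 'S_(a + b) | shuffle s)
             f [ffun i => u (s (lshift b i))] * g [ffun j => u (s (rshift a j))].

Inductive dpgen (W : {vspace Udual}) : forall n, dform n -> Prop :=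
| dpgen0 : @dpgen W 0 (fun _ => 1)
| dpgenS (a n : nat) (w : Udual) (psi : dform n) :
    w \in W -> dpgen W psi -> dpgen W (dmul (@dpow w a.+1) psi).

Definition inDW (W : {vspace Udual}) n (f : dform n) : Prop :=
  exists (m : nat) (c : 'I_m -> k) (g : 'I_m -> dform n),
    (forall i, dpgen W (g i)) /\ forall u, f u = \sum_(i < m) c i * g i u.

End DividedPowers.

Arguments dpow {k U} v n.

From HB Require Import structures.
From mathcomp Require Import all_boot all_order all_fingroup all_algebra.
From mathcomp Require Import zify ring.
From Stdlib Require Import Classical.
Set Implicit Arguments. Unset Strict Implicit. Unset Printing Implicit Defensive.
Import GRing.Theory.
Local Open Scope ring_scope.

(* Polarize phi3 into the symmetric trilinear form F(x,y,z) and expand it in the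
   basis dual to a basis e of U.  If F(v,v,v) <> 0, take e_1 = v completed by a
   basis of the kernel of F(v,v,-): the monomials x_1^*(2) x_j^* with j >= 2 then
   drop out, which is (a).  If F vanishes on the diagonal but F(v,v,w) <> 0, take
   e_1 = v, e_2 = w completed by a complement of <v> in ker F(v,v,-): only
   x_1^*(2) x_2^* survives among those monomials, which is (b).  Otherwise
   F(x,x,y) = 0 identically, so 0 = F(x+y,x+y,z) = 2 F(x,y,z) forces
   characteristic two, and F vanishes as soon as two arguments agree, so only
   the square-free monomials x_i^* x_j^* x_l^* (i < j < l) remain: this is (c). *)

Definition o30 : 'I_3 := @Ordinal 3 0 isT.
Definition o31 : 'I_3 := @Ordinal 3 1 isT.
Definition o32 : 'I_3 := @Ordinal 3 2 isT.
Definition o20 : 'I_2 := @Ordinal 2 0 isT.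
Definition o21 : 'I_2 := @Ordinal 2 1 isT.

Lemma ord3P (x : 'I_3) : [\/ x = o30, x = o31 | x = o32].
Proof.
case: x => [[|[|[|m]]] lt_x3] //.
- by constructor 1; apply: val_inj.
- by constructor 2; apply: val_inj.
- by constructor 3; apply: val_inj.
Qed.

Lemma ord2P (x : 'I_2) : x = o20 \/ x = o21.
Proof.
case: x => [[|[|m]] lt_x2] //.
- by left; apply: val_inj.
- by right; apply: val_inj.
Qed.

Definition ffun2 (T : Type) (x y : T) : {ffun 'I_2 -> T} :=
  [ffun i : 'I_2 => if val i == 0%N then x else y].

Definition ffun3 (T : Type) (x y z : T) : {ffun 'I_3 -> T} :=
  [ffun i : 'I_3 => if val i == 0%N then x else if val i == 1%N then y else z].

Lemma ffun3_eta (T : Type) (u : {ffun 'I_3 -> T}) : u = ffun3 (u o30) (u o31) (u o32).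
Proof. by apply/ffunP => i; rewrite ffunE; case: (ord3P i) => ->. Qed.

Definition nth_fun n (s : seq 'I_n) : 'I_n -> 'I_n := fun x => nth x s x.

Lemma nth_fun_inj n (s : seq 'I_n) : uniq s -> size s == n -> injective (nth_fun s).
Proof.
move=> uniq_s /eqP size_s x y; rewrite /nth_fun => nth_xy.
have ltx : (x < size s)%N by rewrite size_s.
have lty : (y < size s)%N by rewrite size_s.
rewrite (set_nth_default x y lty) in nth_xy.
by apply/val_inj/eqP; rewrite -(nth_uniq x ltx lty uniq_s) nth_xy.
Qed.

Definition lo3 (p : 'I_3) : 'I_3 := if val p == 0%N then o31 else o30.
Definition hi3 (p : 'I_3) : 'I_3 := if val p == 2%N then o31 else o32.
Definition other2 (p : 'I_2) : 'I_2 := if val p == 0%N then o21 else o20.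

Lemma uniq_first3 p : uniq [:: p; lo3 p; hi3 p].
Proof. by case: (ord3P p) => ->. Qed.

Lemma uniq_last3 p : uniq [:: lo3 p; hi3 p; p].
Proof. by case: (ord3P p) => ->. Qed.

Lemma uniq_first2 p : uniq [:: p; other2 p].
Proof. by case: (ord2P p) => ->. Qed.

Definition shuffle12_perm p : 'S_3 := perm (nth_fun_inj (uniq_first3 p) isT).
Definition shuffle21_perm p : 'S_3 := perm (nth_fun_inj (uniq_last3 p) isT).
Definition shuffle11_perm p : 'S_2 := perm (nth_fun_inj (uniq_first2 p) isT).

Lemma lo3_hi3 (p q r : 'I_3) : p != q -> p != r -> (q < r)%N -> lo3 p = q /\ hi3 p = r.
Proof. by case: (ord3P p) => ->; case: (ord3P q) => ->; case: (ord3P r) => ->. Qed.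

Lemma other2_neq (p q : 'I_2) : p != q -> other2 p = q.
Proof. by case: (ord2P p) => ->; case: (ord2P q) => ->. Qed.

Lemma shuffle12E (s : 'S_3) : @shuffle 1 2 s = (s o31 < s o32)%N.
Proof.
rewrite /shuffle.
have -> : [forall i : 'I_1, forall j : 'I_1,
            (i < j)%N ==> (s (lshift 2 i) < s (lshift 2 j))%N].
  by apply/forallP => i; apply/forallP => j; rewrite !ord1.
have r0 : rshift 1 o20 = o31 by apply: val_inj.
have r1 : rshift 1 o21 = o32 by apply: val_inj.
apply/forallP/idP => [sh | lt_s i].
  by have := forallP (sh o20) o21; rewrite r0 r1.
apply/forallP => j.
by case: (ord2P i) => ->; case: (ord2P j) => -> //=; rewrite r0 r1.
Qed.

Lemma shuffle21E (s : 'S_3) : @shuffle 2 1 s = (s o30 < s o31)%N.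
Proof.
rewrite /shuffle.
have -> : [forall i : 'I_1, forall j : 'I_1,
            (i < j)%N ==> (s (rshift 2 i) < s (rshift 2 j))%N].
  by apply/forallP => i; apply/forallP => j; rewrite !ord1.
have l0 : lshift 1 o20 = o30 by apply: val_inj.
have l1 : lshift 1 o21 = o31 by apply: val_inj.
rewrite andbT; apply/forallP/idP => [sh | lt_s i].
  by have := forallP (sh o20) o21; rewrite l0 l1.
apply/forallP => j.
by case: (ord2P i) => ->; case: (ord2P j) => -> //=; rewrite l0 l1.
Qed.

Lemma shuffle11T (s : 'S_(1 + 1)) : shuffle s.
Proof. by apply/andP; split; apply/forallP => i; apply/forallP => j; rewrite !ord1. Qed.

Lemma ltn_homo_ord_leq n (t : 'I_n -> 'I_n) :
  (forall i j : 'I_n, (i < j)%N -> (t i < t j)%N) -> forall i : 'I_n, (i <= t i)%N.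
Proof.
move=> t_homo.
suff le_t m (i : 'I_n) : (i : nat) = m -> (m <= t i)%N by move=> i; apply: le_t.
elim: m i => [|m IHm] i // val_i.
have ltm : (m < n)%N by have := ltn_ord i; lia.
have := IHm (Ordinal ltm) erefl.
have : (t (Ordinal ltm) < t i)%N by apply: t_homo; rewrite /= val_i.
lia.
Qed.

Lemma shuffle_addn0 a (s : 'S_(a + 0)) : shuffle s -> s = 1%g.
Proof.
case/andP=> /forallP s_homo _.
have homo_s (i j : 'I_(a + 0)) : (i < j)%N -> (s i < s j)%N.
  move=> lt_ij.
  have lti : (i < a)%N by have := ltn_ord i; lia.
  have ltj : (j < a)%N by have := ltn_ord j; lia.
  have := forallP (s_homo (Ordinal lti)) (Ordinal ltj); rewrite /= lt_ij /=.
  have -> : lshift 0 (Ordinal lti) = i by apply: val_inj.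
  by have -> : lshift 0 (Ordinal ltj) = j by apply: val_inj.
have homo_sV (i j : 'I_(a + 0)) : (i < j)%N -> ((s^-1)%g i < (s^-1)%g j)%N.
  move=> lt_ij; rewrite ltnNge leq_eqVlt; apply/negP => /orP [/eqP e|].
    by move: lt_ij; rewrite -(permKV s i) -(permKV s j) (val_inj e) ltnn.
  by move=> /homo_s; rewrite !permKV => /(ltn_trans lt_ij); rewrite ltnn.
apply/permP => i; rewrite perm1; apply: val_inj; apply/eqP.
rewrite eqn_leq (ltn_homo_ord_leq homo_s) andbT.
by have := ltn_homo_ord_leq homo_sV (s i); rewrite permK.
Qed.

Section ShuffleProducts.
Variables (k : fieldType) (U : vectType k).

Lemma dmulr1 a (f : dform U a) (u : {ffun 'I_(a + 0) -> U}) :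
  dmul f (fun _ => 1) u = f [ffun i => u (lshift 0 i)].
Proof.
rewrite /dmul (big_pred1 1%g) => [|s] /=.
  by rewrite mulr1; congr f; apply/ffunP => i; rewrite !ffunE perm1.
apply/idP/eqP => [/shuffle_addn0 // | ->].
by apply/andP; split; apply/forallP => i; apply/forallP => j; rewrite ?perm1 ?implybb //; case: i.
Qed.

Lemma dmul12E (f : dform U 1) (g : dform U 2) (u : {ffun 'I_3 -> U}) :
  dmul f g u = f [ffun => u o30] * g (ffun2 (u o31) (u o32))
             + f [ffun => u o31] * g (ffun2 (u o30) (u o32))
             + f [ffun => u o32] * g (ffun2 (u o30) (u o31)).
Proof.
rewrite /dmul (reindex shuffle12_perm) /=; last first.
  exists (fun s : 'S_3 => s o30) => [p _ | s]; first by rewrite permE.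
  rewrite inE shuffle12E => lt_s12; apply/permP => x; rewrite permE /nth_fun.
  have [lo_s hi_s] : lo3 (s o30) = s o31 /\ hi3 (s o30) = s o32.
    by apply: lo3_hi3; rewrite // (inj_eq perm_inj).
  by case: (ord3P x) => ->.
have shuffle_perm p : @shuffle 1 2 (shuffle12_perm p).
  by rewrite shuffle12E !permE /nth_fun /= /lo3 /hi3; case: (ord3P p) => ->.
under eq_bigl do rewrite shuffle_perm.
rewrite !big_ord_recl big_ord0 addr0 addrA.
congr (_ * _ + _ * _ + _ * _); congr (_ _); apply/ffunP => i;
  rewrite !ffunE permE /nth_fun /=; try rewrite ord1 /=; try case: (ord2P i) => -> /=;
  congr (u _); exact: val_inj.
Qed.

Lemma dmul21E (f : dform U 2) (g : dform U 1) (u : {ffun 'I_3 -> U}) :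
  dmul f g u = f (ffun2 (u o31) (u o32)) * g [ffun => u o30]
             + f (ffun2 (u o30) (u o32)) * g [ffun => u o31]
             + f (ffun2 (u o30) (u o31)) * g [ffun => u o32].
Proof.
rewrite /dmul (reindex shuffle21_perm) /=; last first.
  exists (fun s : 'S_3 => s o32) => [p _ | s]; first by rewrite permE.
  rewrite inE shuffle21E => lt_s01; apply/permP => x; rewrite permE /nth_fun.
  have [lo_s hi_s] : lo3 (s o32) = s o30 /\ hi3 (s o32) = s o31.
    by apply: lo3_hi3; rewrite // (inj_eq perm_inj).
  by case: (ord3P x) => ->.
have shuffle_perm p : @shuffle 2 1 (shuffle21_perm p).
  by rewrite shuffle21E !permE /nth_fun /= /lo3 /hi3; case: (ord3P p) => ->.
under eq_bigl do rewrite shuffle_perm.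
rewrite !big_ord_recl big_ord0 addr0 addrA.
congr (_ * _ + _ * _ + _ * _); congr (_ _); apply/ffunP => i;
  rewrite !ffunE permE /nth_fun /=; try rewrite ord1 /=; try case: (ord2P i) => -> /=;
  congr (u _); exact: val_inj.
Qed.

Lemma dmul11E (f g : dform U 1) (u : {ffun 'I_2 -> U}) :
  dmul f g u = f [ffun => u o20] * g [ffun => u o21] + f [ffun => u o21] * g [ffun => u o20].
Proof.
rewrite /dmul (reindex shuffle11_perm) /=; last first.
  exists (fun s : 'S_2 => s o20) => [p _ | s _]; first by rewrite permE.
  apply/permP => x; rewrite permE /nth_fun.
  have other_s : other2 (s o20) = s o21 by apply: other2_neq; rewrite (inj_eq perm_inj).
  by case: (ord2P x) => ->.
under eq_bigl do rewrite shuffle11T.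
rewrite !big_ord_recl big_ord0 addr0.
congr (_ * _ + _ * _); congr (_ _); apply/ffunP => i;
  rewrite !ffunE permE /nth_fun /= ord1 /=; congr (u _); exact: val_inj.
Qed.

Lemma eq_dmulr a b (f : dform U a) (g h : dform U b) :
  (forall v, g v = h v) -> forall u, dmul f g u = dmul f h u.
Proof. by move=> eq_gh u; apply: eq_bigr => s _; rewrite eq_gh. Qed.

Lemma dmulZr a b (f : dform U a) (g : dform U b) c u :
  dmul f (fun v => c * g v) u = c * dmul f g u.
Proof. by rewrite /dmul mulr_sumr; apply: eq_bigr => s _; rewrite mulrCA. Qed.

Lemma dpow1E (y : Udual U) (v : {ffun 'I_1 -> U}) : dpow y 1 v = y (v ord0).
Proof. by rewrite /dpow big_ord1. Qed.

Lemma dpow2E (y : Udual U) (u : {ffun 'I_2 -> U}) : dpow y 2 u = y (u o20) * y (u o21).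
Proof.
rewrite /dpow !big_ord_recl big_ord0 mulr1.
by congr (_ * _); congr (y (u _)); apply: val_inj.
Qed.

Lemma dpow3E (y : Udual U) (u : {ffun 'I_3 -> U}) :
  dpow y 3 u = y (u o30) * y (u o31) * y (u o32).
Proof.
rewrite /dpow !big_ord_recl big_ord0 mulr1 mulrA.
by congr (_ * _ * _); congr (y (u _)); apply: val_inj.
Qed.

Lemma dpow1Z c (y : Udual U) v : dpow (c *: y) 1 v = c * dpow y 1 v.
Proof. by rewrite !dpow1E scale_lfunE. Qed.

End ShuffleProducts.

Section LinearForm.
Variables (k : fieldType) (U : vectType k) (f : U -> k).
Hypothesis f_linear : forall a x y, f (a *: x + y) = a * f x + f y.

Definition lform_fun : U -> k^o := f.

Fact lform_fun_is_linear : linear lform_fun.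
Proof. by move=> a x y; rewrite /lform_fun f_linear. Qed.

HB.instance Definition _ :=
  GRing.isLinear.Build k U k^o *:%R lform_fun lform_fun_is_linear.

Definition lform : Udual U := linfun lform_fun.

Lemma lformE x : lform x = f x.
Proof. by rewrite lfunE. Qed.

End LinearForm.

Section DualBasis.
Variables (k : fieldType) (U : vectType k) (d : nat) (e : d.-tuple U).

Definition dual_basis : d.-tuple (Udual U) :=
  [tuple linfun (coord e i : U -> k^o) | i < d].

Lemma dual_basis_nth (i : 'I_d) : dual_basis`_i = linfun (coord e i : U -> k^o).
Proof. exact: nth_mktuple. Qed.

Lemma dual_basisE (i : 'I_d) x : dual_basis`_i x = coord e i x.
Proof. by rewrite dual_basis_nth lfunE. Qed.

Lemma dual_basis_expand (y : Udual U) :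
  basis_of fullv e -> y = \sum_(i < d) y e`_i *: dual_basis`_i.
Proof.
move=> e_basis; apply/lfunP => x; rewrite sum_lfunE.
rewrite {1}(coord_basis e_basis (memvf x)) linear_sum; apply: eq_bigr => i _.
by rewrite linearZ scale_lfunE dual_basisE; exact: mulrC.
Qed.

Lemma dual_basis_basis : basis_of fullv e -> basis_of fullv dual_basis.
Proof.
move=> e_basis; rewrite basisEdim size_tuple; apply/andP; split.
  apply/subvP => y _; rewrite (dual_basis_expand y e_basis).
  by apply: memv_suml => i _; apply/memvZ/memv_span/mem_nth; rewrite size_tuple.
by rewrite dimvf /Udual /dim /= muln1 -(size_basis e_basis) dimvf.
Qed.

End DualBasis.

Lemma dual_basis_lift0 (k : fieldType) (U : vectType k) m (e : m.+1.-tuple U) (j : 'I_m) :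
  (dual_basis e)`_(lift ord0 j) \in << drop 1 (dual_basis e) >>%VS.
Proof.
apply: memv_span.
have -> : (dual_basis e)`_(lift ord0 j) = (drop 1 (dual_basis e))`_j by rewrite nth_drop.
by apply: mem_nth; rewrite size_drop size_tuple subn1.
Qed.

Section TrilinearForm.
Variables (k : fieldType) (U : vectType k) (phi : dform U 3).
Hypothesis phi_in : inDU phi.

Definition eval3 (x y z : U) : k := phi (ffun3 x y z).

Lemma phi_eval3 u : phi u = eval3 (u o30) (u o31) (u o32).
Proof. by rewrite {1}(ffun3_eta u). Qed.

Lemma eval3_linear1 a v w y z : eval3 (a *: v + w) y z = a * eval3 v y z + eval3 w y z.
Proof.
have [phi_lin _] := phi_in.
have := phi_lin (ffun3 v y z) o30 a v w; rewrite /eval3.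
have ffun3_set0 t : [ffun j => if j == o30 then t else ffun3 v y z j] = ffun3 t y z.
  by apply/ffunP => j; rewrite !ffunE; case: (ord3P j) => ->.
by rewrite !ffun3_set0.
Qed.

Lemma eval3_swap (s : 'S_3) x y z :
  eval3 x y z = phi [ffun j => ffun3 x y z (s j)].
Proof. by have [_ phi_sym] := phi_in; rewrite /eval3 phi_sym. Qed.

Lemma eval3C12 x y z : eval3 x y z = eval3 y x z.
Proof.
rewrite (eval3_swap (tperm o30 o31)); congr phi.
by apply/ffunP => j; rewrite !ffunE; case: (ord3P j) => ->; rewrite ?tpermL ?tpermR ?tpermD.
Qed.

Lemma eval3C23 x y z : eval3 x y z = eval3 x z y.
Proof.
rewrite (eval3_swap (tperm o31 o32)); congr phi.
by apply/ffunP => j; rewrite !ffunE; case: (ord3P j) => ->; rewrite ?tpermL ?tpermR ?tpermD.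
Qed.

Lemma eval3C13 x y z : eval3 x y z = eval3 z y x.
Proof. by rewrite eval3C12 eval3C23 eval3C12. Qed.

Lemma eval3_linear3 x y a v w : eval3 x y (a *: v + w) = a * eval3 x y v + eval3 x y w.
Proof. by rewrite eval3C13 eval3_linear1 [eval3 v _ _]eval3C13 [eval3 w _ _]eval3C13. Qed.

Lemma eval3D1 v w y z : eval3 (v + w) y z = eval3 v y z + eval3 w y z.
Proof. by rewrite -[v]scale1r eval3_linear1 mul1r scale1r. Qed.

Lemma eval3D2 x v w z : eval3 x (v + w) z = eval3 x v z + eval3 x w z.
Proof. by rewrite eval3C12 eval3D1 eval3C12 [eval3 w _ _]eval3C12. Qed.

Lemma eval30 y z : eval3 0 y z = 0.
Proof. by apply: (addrI (eval3 0 y z)); rewrite -eval3D1 !addr0. Qed.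

Lemma eval3_suml n (c : 'I_n -> k) (v : 'I_n -> U) y z :
  eval3 (\sum_(i < n) c i *: v i) y z = \sum_(i < n) c i * eval3 (v i) y z.
Proof.
elim: n c v => [|n IHn] c v; first by rewrite !big_ord0 eval30.
by rewrite !big_ord_recr /= addrC eval3_linear1 IHn addrC.
Qed.

Lemma eval3_basis d (e : d.-tuple U) : basis_of fullv e -> forall x y z,
  eval3 x y z = \sum_(i < d) \sum_(j < d) \sum_(l < d)
     eval3 e`_i e`_j e`_l * (coord e i x * coord e j y * coord e l z).
Proof.
move=> e_basis x y z.
rewrite {1}(coord_basis e_basis (memvf x)) eval3_suml; apply: eq_bigr => i _.
rewrite eval3C12 {1}(coord_basis e_basis (memvf y)) eval3_suml mulr_sumr.
apply: eq_bigr => j _; rewrite eval3C12 eval3C13.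
rewrite {1}(coord_basis e_basis (memvf z)) eval3_suml !mulr_sumr; apply: eq_bigr => l _.
by rewrite eval3C13; ring.
Qed.

Lemma eval3_mulr2n_eq0 : (forall x y, eval3 x x y = 0) -> forall x y z, eval3 x y z *+ 2 = 0.
Proof.
move=> eval3_xxy x y z.
have := eval3_xxy (x + y) z.
by rewrite eval3D1 !eval3D2 !eval3_xxy add0r addr0 [eval3 y x z]eval3C12.
Qed.

End TrilinearForm.

Section DividedPowerSubspace.
Variables (k : fieldType) (U : vectType k) (W : {vspace Udual U}).

Lemma inDW_eq n (f g : dform U n) : (forall u, f u = g u) -> inDW W g -> inDW W f.
Proof.
by move=> eq_fg [m [c [gs [gs_gen g_sum]]]]; exists m, c, gs; split=> // u; rewrite eq_fg.
Qed.

Lemma inDW_gen n (g : dform U n) : dpgen W g -> inDW W g.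
Proof. by exists 1%N, (fun=> 1), (fun=> g); split=> // u; rewrite big_ord1 mul1r. Qed.

Lemma inDW0 n : inDW W (fun _ : {ffun 'I_n -> U} => 0).
Proof. by exists 0%N, (fun=> 0), (fun=> fun=> 0); split=> [[]|u] //; rewrite big_ord0. Qed.

Lemma inDWZ n a (f : dform U n) : inDW W f -> inDW W (fun u => a * f u).
Proof.
move=> [m [c [gs [gs_gen f_sum]]]]; exists m, (fun i => a * c i), gs; split=> // u.
by rewrite f_sum mulr_sumr; apply: eq_bigr => i _; rewrite mulrA.
Qed.

Lemma inDWD n (f g : dform U n) : inDW W f -> inDW W g -> inDW W (fun u => f u + g u).
Proof.
move=> [m1 [c1 [g1 [g1_gen f_sum]]]] [m2 [c2 [g2 [g2_gen g_sum]]]].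
exists (m1 + m2)%N, (fun i => match split i with inl i1 => c1 i1 | inr i2 => c2 i2 end),
  (fun i => match split i with inl i1 => g1 i1 | inr i2 => g2 i2 end); split.
  by move=> i; case: (split i).
move=> u; rewrite f_sum g_sum big_split_ord.
by congr (_ + _); apply: eq_bigr => i _; rewrite ?(unsplitK (inl _ i)) ?(unsplitK (inr _ i)).
Qed.

Lemma inDW_dmul n a y (g : dform U n) : y \in W -> inDW W g ->
  inDW W (dmul (dpow y a.+1) g).
Proof.
move=> yW [m [c [gs [gs_gen g_sum]]]].
exists m, c, (fun i => dmul (dpow y a.+1) (gs i)); split => [i|u].
  exact: dpgenS.
rewrite /dmul; under eq_bigr do rewrite g_sum mulr_sumr.
rewrite exchange_big /=; apply: eq_bigr => i _.
by rewrite mulr_sumr; apply: eq_bigr => s _; rewrite mulrCA.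
Qed.

Lemma inDW_dpow1 y : y \in W -> inDW W (dpow y 1).
Proof.
move=> yW; apply: inDW_eq (inDW_gen (dpgenS 0 yW (dpgen0 W))) => u.
by rewrite dmulr1 !dpow1E ffunE; congr (y (u _)); apply: val_inj.
Qed.

Lemma inDW_dpow2 y : y \in W -> inDW W (dpow y 2).
Proof.
move=> yW; apply: inDW_eq (inDW_gen (dpgenS 1 yW (dpgen0 W))) => u.
by rewrite dmulr1 !dpow2E !ffunE; congr (y (u _) * y (u _)); apply: val_inj.
Qed.

Lemma inDW_dpow3 y : y \in W -> inDW W (dpow y 3).
Proof.
move=> yW; apply: inDW_eq (inDW_gen (dpgenS 2 yW (dpgen0 W))) => u.
by rewrite dmulr1 !dpow3E !ffunE; congr (y (u _) * y (u _) * y (u _)); apply: val_inj.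
Qed.

End DividedPowerSubspace.

Section SumSplit.
Variable R : comPzRingType.
Local Notation lift0 := (lift ord0).

Lemma sum2_split0 m (c : 'I_m.+1 -> 'I_m.+1 -> R) (a b : 'I_m.+1 -> R) :
  (forall j l, c j l = c l j) ->
  \sum_j \sum_l c j l * (a j * b l) =
    c ord0 ord0 * (a ord0 * b ord0)
  + (a ord0 * \sum_l c ord0 (lift0 l) * b (lift0 l)
     + b ord0 * \sum_l c ord0 (lift0 l) * a (lift0 l))
  + \sum_j \sum_l c (lift0 j) (lift0 l) * (a (lift0 j) * b (lift0 l)).
Proof.
move=> cC.
rewrite big_ord_recl big_ord_recl.
under [\sum_(j < m) \sum_l _]eq_bigr do rewrite big_ord_recl.
rewrite big_split /= !mulr_sumr.
have -> : \sum_(l < m) c (lift0 l) ord0 * (a (lift0 l) * b ord0)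
        = \sum_(l < m) b ord0 * (c ord0 (lift0 l) * a (lift0 l)).
  by apply: eq_bigr => l _; rewrite cC; ring.
have -> : \sum_(l < m) c ord0 (lift0 l) * (a ord0 * b (lift0 l))
        = \sum_(l < m) a ord0 * (c ord0 (lift0 l) * b (lift0 l)).
  by apply: eq_bigr => l _; ring.
ring.
Qed.

Lemma sum3_split0 m (c : 'I_m.+1 -> 'I_m.+1 -> 'I_m.+1 -> R) (a b e : 'I_m.+1 -> R) :
  (forall i j l, c i j l = c j i l) -> (forall i j l, c i j l = c i l j) ->
  let A x := \sum_l c ord0 ord0 (lift0 l) * x (lift0 l) in
  let Q (x y : 'I_m.+1 -> R) :=
    \sum_j \sum_l c ord0 (lift0 j) (lift0 l) * (x (lift0 j) * y (lift0 l)) in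
  \sum_i \sum_j \sum_l c i j l * (a i * b j * e l) =
    c ord0 ord0 ord0 * (a ord0 * b ord0 * e ord0)
  + (a ord0 * b ord0 * A e + a ord0 * e ord0 * A b + b ord0 * e ord0 * A a)
  + (a ord0 * Q b e + b ord0 * Q a e + e ord0 * Q a b)
  + \sum_i \sum_j \sum_l c (lift0 i) (lift0 j) (lift0 l)
        * (a (lift0 i) * b (lift0 j) * e (lift0 l)).
Proof.
move=> cC12 cC23 A Q.
have split_inner i : \sum_j \sum_l c i j l * (a i * b j * e l)
   = a i * (c i ord0 ord0 * (b ord0 * e ord0)
      + (b ord0 * \sum_l c i ord0 (lift0 l) * e (lift0 l)
         + e ord0 * \sum_l c i ord0 (lift0 l) * b (lift0 l))
      + \sum_j \sum_l c i (lift0 j) (lift0 l) * (b (lift0 j) * e (lift0 l))).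
  rewrite -sum2_split0 ?mulr_sumr; last exact: cC23.
  by apply: eq_bigr => j _; rewrite mulr_sumr; apply: eq_bigr => l _; ring.
under eq_bigr do rewrite split_inner.
rewrite big_ord_recl /A /Q !mulrDr.
under [\sum_(i < m) a (lift0 i) * _]eq_bigr do rewrite !mulrDr.
rewrite !big_split /= !mulr_sumr.
have -> : \sum_(i < m) a (lift0 i) * (c (lift0 i) ord0 ord0 * (b ord0 * e ord0))
        = \sum_(i < m) b ord0 * e ord0 * (c ord0 ord0 (lift0 i) * a (lift0 i)).
  by apply: eq_bigr => i _; rewrite (cC12 _ ord0) (cC23 ord0); ring.
have -> : \sum_(i < m) a (lift0 i) * (b ord0 * \sum_l c (lift0 i) ord0 (lift0 l) * e (lift0 l))
        = \sum_(i < m) b ord0 * \sum_l c ord0 (lift0 i) (lift0 l) * (a (lift0 i) * e (lift0 l)).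
  apply: eq_bigr => i _; rewrite !mulr_sumr; apply: eq_bigr => l _.
  by rewrite (cC12 _ ord0); ring.
have -> : \sum_(i < m) a (lift0 i) * (e ord0 * \sum_l c (lift0 i) ord0 (lift0 l) * b (lift0 l))
        = \sum_(i < m) e ord0 * \sum_l c ord0 (lift0 i) (lift0 l) * (a (lift0 i) * b (lift0 l)).
  apply: eq_bigr => i _; rewrite !mulr_sumr; apply: eq_bigr => l _.
  by rewrite (cC12 _ ord0); ring.
have -> : \sum_(i < m) a (lift0 i) *
            \sum_j \sum_l c (lift0 i) (lift0 j) (lift0 l) * (b (lift0 j) * e (lift0 l))
        = \sum_i \sum_j \sum_l c (lift0 i) (lift0 j) (lift0 l)
            * (a (lift0 i) * b (lift0 j) * e (lift0 l)).
  apply: eq_bigr => i _; rewrite mulr_sumr; apply: eq_bigr => j _.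
  by rewrite mulr_sumr; apply: eq_bigr => l _; ring.
rewrite -!mulr_sumr; ring.
Qed.

End SumSplit.

Section DistinctTriples.
Variables (R : nmodType) (n : nat).
Implicit Types G : 'I_n -> 'I_n -> 'I_n -> R.

Let S3 G := \sum_i \sum_j \sum_l G i j l.

Let eq_S3 G1 G2 : (forall i j l, G1 i j l = G2 i j l) -> S3 G1 = S3 G2.
Proof. by move=> eqG; apply: eq_bigr => i _; apply: eq_bigr => j _; apply: eq_bigr. Qed.

Let S3C12 G : S3 G = S3 (fun i j l => G j i l).
Proof. exact: exchange_big. Qed.

Let S3C23 G : S3 G = S3 (fun i j l => G i l j).
Proof. by apply: eq_bigr => i _; apply: exchange_big. Qed.

Let S3D G1 G2 : S3 (fun i j l => G1 i j l + G2 i j l) = S3 G1 + S3 G2.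
Proof.
rewrite /S3 -big_split; apply: eq_bigr => i _; rewrite -big_split.
by apply: eq_bigr => j _; rewrite -big_split.
Qed.

Let when (b : bool) (x : R) := if b then x else 0.

Let sum_orders (i j l : 'I_n) (x : R) : i != j -> j != l -> i != l ->
  x = when ((i < j) && (j < l))%N x + when ((j < i) && (i < l))%N x
    + when ((i < l) && (l < j))%N x + when ((l < i) && (i < j))%N x
    + when ((j < l) && (l < i))%N x + when ((l < j) && (j < i))%N x.
Proof.
rewrite -!val_eqE /when => /= neq_ij neq_jl neq_il.
case: ltngtP neq_ij => // lt_ij _; case: ltngtP neq_jl => // lt_jl _;
  case: ltngtP neq_il => // lt_il _; rewrite /= ?addr0 ?add0r //; lia.
Qed.

Lemma sum_distinct_triples G :
  (forall i j l : 'I_n, [|| i == j, j == l | i == l] -> G i j l = 0) ->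
  \sum_i \sum_j \sum_l G i j l =
  \sum_(i < n) \sum_(j < n | (i < j)%N) \sum_(l < n | (j < l)%N)
     (G i j l + G j i l + G i l j + G j l i + G l i j + G l j i).
Proof.
move=> G_diag.
transitivity (S3 (fun i j l =>
   when ((i < j) && (j < l))%N (G i j l) + when ((j < i) && (i < l))%N (G i j l)
 + when ((i < l) && (l < j))%N (G i j l) + when ((l < i) && (i < j))%N (G i j l)
 + when ((j < l) && (l < i))%N (G i j l) + when ((l < j) && (j < i))%N (G i j l))).
  apply: eq_S3 => i j l.
  case: (boolP [|| i == j, j == l | i == l]) => [diag | /norP[neq_ij /norP[neq_jl neq_il]]].
    by rewrite G_diag // /when !if_same !addr0.
  exact: sum_orders.
transitivity (S3 (fun i j l => when ((i < j) && (j < l))%N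
   (G i j l + G j i l + G i l j + G j l i + G l i j + G l j i))); last first.
  apply: eq_bigr => i _; rewrite [RHS]big_mkcond; apply: eq_bigr => j _ /=.
  case: ifP => _; last by apply: big1.
  by rewrite [RHS]big_mkcond; apply: eq_bigr.
rewrite !S3D [RHS](eq_S3 (G2 := fun i j l =>
    when ((i < j) && (j < l))%N (G i j l) + when ((i < j) && (j < l))%N (G j i l)
  + when ((i < j) && (j < l))%N (G i l j) + when ((i < j) && (j < l))%N (G j l i)
  + when ((i < j) && (j < l))%N (G l i j) + when ((i < j) && (j < l))%N (G l j i))); last first.
  by move=> i j l; rewrite /when; case: ifP; rewrite ?addr0.
rewrite !S3D; congr (_ + _ + _ + _ + _ + _).
- by rewrite [LHS]S3C12.
- by rewrite [LHS]S3C23.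
- by rewrite [LHS]S3C23 [LHS]S3C12.
- by rewrite [LHS]S3C12 [LHS]S3C23.
- by rewrite [LHS]S3C23 [LHS]S3C12 [LHS]S3C23.
Qed.

End DistinctTriples.

Section PolynomialForms.
Variables (k : fieldType) (U : vectType k).
Local Notation lift0 := (lift ord0).

Definition form2 m (Y : 'I_m -> Udual U) (c : 'I_m -> 'I_m -> k) : dform U 2 :=
  fun u => \sum_j \sum_l c j l * (Y j (u o20) * Y l (u o21)).

Definition form3 m (Y : 'I_m -> Udual U) (c : 'I_m -> 'I_m -> 'I_m -> k) : dform U 3 :=
  fun u => \sum_i \sum_j \sum_l c i j l * (Y i (u o30) * Y j (u o31) * Y l (u o32)).

Lemma lincombE m (c : 'I_m -> k) (Y : 'I_m -> Udual U) x :
  (\sum_l c l *: Y l) x = \sum_l c l * Y l x.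
Proof. by rewrite sum_lfunE; apply: eq_bigr => l _; rewrite scale_lfunE. Qed.

Lemma form2_split0 m (Y : 'I_m.+1 -> Udual U) c :
  (forall j l, c j l = c l j) -> forall u,
  form2 Y c u = c ord0 ord0 * dpow (Y ord0) 2 u
    + dmul (dpow (Y ord0) 1) (dpow (\sum_l c ord0 (lift0 l) *: Y (lift0 l)) 1) u
    + form2 (Y \o lift0) (fun j l => c (lift0 j) (lift0 l)) u.
Proof.
move=> cC u; rewrite /form2 sum2_split0 // dpow2E dmul11E !dpow1E !ffunE !lincombE /=.
ring.
Qed.

Lemma form3_split0 m (Y : 'I_m.+1 -> Udual U) c :
  (forall i j l, c i j l = c j i l) -> (forall i j l, c i j l = c i l j) -> forall u,
  form3 Y c u = c ord0 ord0 ord0 * dpow (Y ord0) 3 u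
    + dmul (dpow (Y ord0) 2) (dpow (\sum_l c ord0 ord0 (lift0 l) *: Y (lift0 l)) 1) u
    + dmul (dpow (Y ord0) 1) (form2 (Y \o lift0) (fun j l => c ord0 (lift0 j) (lift0 l))) u
    + form3 (Y \o lift0) (fun i j l => c (lift0 i) (lift0 j) (lift0 l)) u.
Proof.
move=> cC12 cC23 u.
rewrite /form3 sum3_split0 // dpow3E dmul21E dmul12E /form2 !dpow2E !dpow1E !ffunE !lincombE /=.
ring.
Qed.

Variable W : {vspace Udual U}.

Lemma lincomb_mem m (c : 'I_m -> k) (Y : 'I_m -> Udual U) :
  (forall j, Y j \in W) -> \sum_l c l *: Y l \in W.
Proof. by move=> YW; apply: memv_suml => l _; apply: memvZ. Qed.

Lemma inDW_form2 m (Y : 'I_m -> Udual U) c :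
  (forall j, Y j \in W) -> (forall j l, c j l = c l j) -> inDW W (form2 Y c).
Proof.
elim: m Y c => [|m IHm] Y c YW cC.
  by apply: inDW_eq (inDW0 W 2) => u; rewrite /form2 big_ord0.
apply: (inDW_eq (form2_split0 Y cC)); apply: inDWD; first apply: inDWD.
- exact/inDWZ/inDW_dpow2.
- exact/(inDW_dmul 0 (YW ord0))/inDW_dpow1/lincomb_mem.
- by apply: IHm => //= j; apply: YW.
Qed.

Lemma inDW_form3 m (Y : 'I_m -> Udual U) c :
  (forall j, Y j \in W) -> (forall i j l, c i j l = c j i l) ->
  (forall i j l, c i j l = c i l j) -> inDW W (form3 Y c).
Proof.
elim: m Y c => [|m IHm] Y c YW cC12 cC23.
  by apply: inDW_eq (inDW0 W 3) => u; rewrite /form3 big_ord0.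
apply: (inDW_eq (form3_split0 Y cC12 cC23)); apply: inDWD; first apply: inDWD; first apply: inDWD.
- exact/inDWZ/inDW_dpow3.
- exact/(inDW_dmul 1 (YW ord0))/inDW_dpow1/lincomb_mem.
- by apply/(inDW_dmul 0 (YW ord0))/inDW_form2 => //= j; apply: YW.
- by apply: IHm => //= j; apply: YW.
Qed.

End PolynomialForms.

Section KernelBasis.
Variables (k : fieldType) (U : vectType k) (l : Udual U).

Lemma dim_lker_ge : (\dim (fullv : {vspace U}) <= \dim (lker l) + 1)%N.
Proof.
have := limg_ker_dim l fullv; rewrite capfv => <-.
by rewrite leq_add2l; have := dimvS (subvf (l @: fullv)%VS); rewrite dimvf.
Qed.

Lemma basis_cons_lker v : l v != 0 -> basis_of fullv (v :: vbasis (lker l)).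
Proof.
move=> lv_neq0; rewrite basisEfree subvf /=; apply/andP; split.
  rewrite free_cons (span_basis (vbasisP _)) memv_ker lv_neq0.
  exact: basis_free (vbasisP _).
by rewrite size_tuple; have := dim_lker_ge; lia.
Qed.

Lemma basis_cons2_lker v w : l v = 0 -> l w != 0 -> v != 0 ->
  basis_of fullv (v :: w :: vbasis (lker l :\: <[v]>)).
Proof.
move=> lv0 lw_neq0 v_neq0; set H := (lker l :\: <[v]>)%VS.
have sub_H : (H <= lker l)%VS by apply: diffvSl.
rewrite basisEfree subvf /=; apply/andP; split.
  rewrite free_cons free_cons (span_basis (vbasisP _)) span_cons (span_basis (vbasisP _)).
  apply/and3P; split; last exact: basis_free (vbasisP _).
    apply/memv_addP => -[_ /vlineP[c ->] [y yH v_eq]].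
    have /eqP ly0 : l y == 0 by rewrite -memv_ker (subvP sub_H).
    have : (l v : k) = c * l w by rewrite v_eq linearD linearZ /= ly0 addr0.
    rewrite lv0 => /esym/eqP; rewrite mulf_eq0 (negbTE lw_neq0) orbF => /eqP c0.
    move: v_eq; rewrite c0 scale0r add0r => v_eq; subst y.
    have : v \in (H :&: <[v]>)%VS by rewrite memv_cap yH memv_line.
    by rewrite capv_diff memv0 (negbTE v_neq0).
  by apply: contra lw_neq0 => /(subvP sub_H); rewrite memv_ker.
have le_ker_H : (\dim (lker l) <= \dim H + 1)%N.
  rewrite -{1}(addv_diff_cap (lker l) <[v]>).
  apply: leq_trans (dimv_add_leqif _ _) _.
  rewrite leq_add2l; apply: leq_trans (dimvS (capvSr _ _)) _.
  by rewrite dim_vline; case: (v != 0).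
by rewrite size_tuple; have := dim_lker_ge; lia.
Qed.

End KernelBasis.

Definition cubic_normal_form (k : fieldType) (U : vectType k) (d : nat) (phi3 : dform U 3) :=
  exists (alpha : k) (X : d.-tuple (Udual U)),
    alpha \is a GRing.unit /\ basis_of fullv X /\
    let W := (<< drop 1 X >>)%VS in
    [\/ exists (phi20 : dform U 2) (phi30 : dform U 3),
          [/\ inDW W phi20, inDW W phi30 &
              forall u, alpha * phi3 u
                = dpow X`_0 3 u + dmul (dpow X`_0 1) phi20 u + phi30 u],
        exists (phi20 : dform U 2) (phi30 : dform U 3),
          [/\ inDW W phi20, inDW W phi30 &
              forall u, alpha * phi3 u
                = dmul (dpow X`_0 2) (dpow X`_1 1) u
                  + dmul (dpow X`_0 1) phi20 u + phi30 u]
      | 2%N \in [pchar k] /\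
        exists c : 'I_d -> 'I_d -> 'I_d -> k,
          forall u, phi3 u =
            \sum_(i < d) \sum_(j < d | (i < j)%N) \sum_(l < d | (j < l)%N)
               c i j l * dmul (dmul (dpow X`_i 1) (dpow X`_j 1)) (dpow X`_l 1) u].

Section CubicForm.
Variables (k : fieldType) (U : vectType k) (phi : dform U 3).
Hypothesis phi_in : inDU phi.
Local Notation eval3 := (eval3 phi).
Local Notation lift0 := (lift ord0).

Lemma form3_dual_basis d (e : d.-tuple U) : basis_of fullv e -> forall u,
  phi u = form3 (fun i : 'I_d => (dual_basis e)`_i) (fun i j l => eval3 e`_i e`_j e`_l) u.
Proof.
move=> e_basis u; rewrite phi_eval3 (eval3_basis phi_in e_basis).
apply: eq_bigr => i _; apply: eq_bigr => j _; apply: eq_bigr => l _.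
by rewrite !dual_basisE.
Qed.

Lemma dform3_split_dual_basis m (e : m.+1.-tuple U) : basis_of fullv e ->
  let X := dual_basis e in
  exists (phi20 : dform U 2) (phi30 : dform U 3),
   [/\ inDW << drop 1 X >> phi20, inDW << drop 1 X >> phi30 &
     forall u, phi u = eval3 e`_0 e`_0 e`_0 * dpow X`_0 3 u
        + dmul (dpow X`_0 2) (dpow (\sum_(l < m) eval3 e`_0 e`_0 e`_(lift0 l) *: X`_(lift0 l)) 1) u
        + dmul (dpow X`_0 1) phi20 u + phi30 u].
Proof.
move=> e_basis X; pose c (i j l : 'I_m.+1) := eval3 e`_i e`_j e`_l.
have cC12 i j l : c i j l = c j i l by apply: eval3C12.
have cC23 i j l : c i j l = c i l j by apply: eval3C23.
have XW j : X`_(lift0 j) \in << drop 1 X >>%VS := dual_basis_lift0 e j.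
eexists; eexists; split; last first.
  by move=> u; rewrite (form3_dual_basis e_basis) (form3_split0 _ cC12 cC23).
- by apply: inDW_form3.
- by apply: inDW_form2 => // j l; apply: cC23.
Qed.

Lemma cubic_normal_form_cube (d : nat) (v : U) : \dim (fullv : {vspace U}) = d ->
  eval3 v v v != 0 -> cubic_normal_form d phi.
Proof.
move=> dimU vvv_neq0.
pose l := lform (eval3 v v).
have lE x : l x = eval3 v v x := lformE (eval3_linear3 phi_in v v) x.
have s_basis : basis_of fullv (v :: vbasis (lker l)) by apply: basis_cons_lker; rewrite lE.
have := size_basis (X := in_tuple _) s_basis; rewrite dimU.
case: d dimU => // m dimU /esym/eqP size_s.
pose e := Tuple size_s; have e_basis : basis_of fullv e := s_basis.
have [phi20 [phi30 [phi20W phi30W phi_split]]] := dform3_split_dual_basis e_basis.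
have A0 : \sum_(j < m) eval3 e`_0 e`_0 e`_(lift0 j) *: (dual_basis e)`_(lift0 j)
          = 0 *: (dual_basis e)`_0.
  rewrite scale0r big1 // => j _; rewrite -lE.
  have /eqP -> : l e`_(lift0 j) == 0.
    by rewrite -memv_ker; apply/vbasis_mem/mem_nth; have := size_s; rewrite /= eqSS => /eqP ->.
  by rewrite scale0r.
set c := eval3 v v v.
exists c^-1, (dual_basis e); split; first by rewrite unitfE invr_eq0.
split; first exact: dual_basis_basis.
constructor 1; exists (fun u => c^-1 * phi20 u), (fun u => c^-1 * phi30 u).
split; [exact: inDWZ | exact: inDWZ | move=> u].
rewrite phi_split A0 (eq_dmulr _ (dpow1Z _ _)) !dmulZr -/c.
by field.
Qed.

Lemma cubic_normal_form_square (d : nat) (v w : U) : \dim (fullv : {vspace U}) = d ->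
  (forall x, eval3 x x x = 0) -> eval3 v v w != 0 -> cubic_normal_form d phi.
Proof.
move=> dimU eval3_xxx vvw_neq0.
pose l := lform (eval3 v v).
have lE x : l x = eval3 v v x := lformE (eval3_linear3 phi_in v v) x.
have v_neq0 : v != 0 by apply: contraNneq vvw_neq0 => ->; rewrite eval30.
have s_basis : basis_of fullv (v :: w :: vbasis (lker l :\: <[v]>)).
  by apply: basis_cons2_lker; rewrite ?lE.
have := size_basis (X := in_tuple _) s_basis; rewrite dimU.
case: d dimU => [|[|m]] // dimU /esym/eqP size_s.
pose e := Tuple size_s; have e_basis : basis_of fullv e := s_basis.
have [phi20 [phi30 [phi20W phi30W phi_split]]] := dform3_split_dual_basis e_basis.
set c := eval3 v v w.
have A1 : \sum_(j < m.+1) eval3 e`_0 e`_0 e`_(lift0 j) *: (dual_basis e)`_(lift0 j)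
          = c *: (dual_basis e)`_1.
  rewrite big_ord_recl big1 ?addr0 // => j _; rewrite -lE.
  have /eqP -> : l e`_(lift0 (lift0 j)) == 0.
    rewrite -memv_ker; apply/(subvP (diffvSl _ _))/vbasis_mem/mem_nth.
    by have := size_s; rewrite /= !eqSS => /eqP ->.
  by rewrite scale0r.
exists c^-1, (dual_basis e); split; first by rewrite unitfE invr_eq0.
split; first exact: dual_basis_basis.
constructor 2; exists (fun u => c^-1 * phi20 u), (fun u => c^-1 * phi30 u).
split; [exact: inDWZ | exact: inDWZ | move=> u].
rewrite phi_split A1 (eq_dmulr _ (dpow1Z _ _)) !dmulZr [eval3 e`_0 _ _]eval3_xxx.
by field.
Qed.

Lemma cubic_normal_form_char2 (d : nat) : \dim (fullv : {vspace U}) = d ->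
  (forall x y, eval3 x x y = 0) -> (exists u, phi u != 0) -> cubic_normal_form d phi.
Proof.
move=> <- eval3_xxy [u0 phi_u0_neq0].
pose e := vbasis (fullv : {vspace U}); have e_basis : basis_of fullv e := vbasisP _.
pose c (i j l : 'I_(\dim (fullv : {vspace U}))) := eval3 e`_i e`_j e`_l.
exists 1, (dual_basis e); split; first exact: unitr1.
split; first exact: dual_basis_basis.
constructor 3; split.
  have := eval3_mulr2n_eq0 phi_in eval3_xxy (u0 o30) (u0 o31) (u0 o32).
  rewrite -phi_eval3 -mulr_natl => /eqP; rewrite mulf_eq0 (negbTE phi_u0_neq0) orbF.
  by rewrite inE.
have c_diag i j l : [|| i == j, j == l | i == l] -> c i j l = 0.
  case/or3P => /eqP <-; rewrite /c;
    [|rewrite (eval3C13 phi_in) | rewrite (eval3C23 phi_in)]; apply: eval3_xxy.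
exists c => u; rewrite (form3_dual_basis e_basis) -/c /form3 sum_distinct_triples; last first.
  by move=> i j l /c_diag ->; rewrite mul0r.
apply: eq_bigr => i _; apply: eq_bigr => j _; apply: eq_bigr => l _.
have [cji cil cjl cli clj] : [/\ c j i l = c i j l, c i l j = c i j l, c j l i = c i j l,
                                 c l i j = c i j l & c l j i = c i j l].
  rewrite /c; split; [exact: eval3C12 | exact: eval3C23 | | | exact: eval3C13].
  - by rewrite (eval3C12 phi_in) (eval3C13 phi_in).
  - by rewrite (eval3C13 phi_in) (eval3C12 phi_in).
rewrite cji cil cjl cli clj dmul21E !dmul11E !dpow1E !ffunE.
ring.
Qed.

End CubicForm.


Unset Implicit Arguments. Set Strict Implicit.
Theorem lemma3p1 (k : fieldType) (U : vectType k) (d : nat)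
  (hd : \dim (fullv : {vspace U}) = d)
  (phi3 : dform U 3) (hphi : inDU phi3) (hnz : exists u, phi3 u != 0) :
  exists (alpha : k) (X : d.-tuple (Udual U)),
    alpha \is a GRing.unit /\ basis_of fullv X /\
    let W := (<< drop 1 X >>)%VS in
    [\/ exists (phi20 : dform U 2) (phi30 : dform U 3),
          [/\ inDW W phi20, inDW W phi30 &
              forall u, alpha * phi3 u
                = dpow X`_0 3 u + dmul (dpow X`_0 1) phi20 u + phi30 u],
        exists (phi20 : dform U 2) (phi30 : dform U 3),
          [/\ inDW W phi20, inDW W phi30 &
              forall u, alpha * phi3 u
                = dmul (dpow X`_0 2) (dpow X`_1 1) u
                  + dmul (dpow X`_0 1) phi20 u + phi30 u]
      | 2%N \in [pchar k] /\
        exists c : 'I_d -> 'I_d -> 'I_d -> k,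
          forall u, phi3 u =
            \sum_(i < d) \sum_(j < d | (i < j)%N) \sum_(l < d | (j < l)%N)
               c i j l * dmul (dmul (dpow X`_i 1) (dpow X`_j 1)) (dpow X`_l 1) u].
Proof.
change (cubic_normal_form d phi3).
have [[v vvv_neq0] | no_cube] := classic (exists v, eval3 phi3 v v v != 0).
  exact (cubic_normal_form_cube hphi hd vvv_neq0).
have eval3_xxx x : eval3 phi3 x x x = 0.
  by apply/eqP/negPn/negP => xxx_neq0; apply: no_cube; exists x.
have [[v [w vvw_neq0]] | no_square] := classic (exists v w, eval3 phi3 v v w != 0).
  exact (cubic_normal_form_square hphi hd eval3_xxx vvw_neq0).
refine (cubic_normal_form_char2 hphi hd (fun x y => _) hnz).
by apply/eqP/negPn/negP => xxy_neq0; apply: no_square; exists x, y.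
Qed.
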